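(* Let $X$ be a topological space, $\Delta$ a partition of $X$, $Y=X/\Delta$ with the quotient topology, $p:X\to Y$ the quotient map, $\omega\in\Delta$ and $y=p(\omega)$. Then $H(\omega)\subset H_S(\omega)\subset p^{-1}(H(y))$. If $p$ is an open map, then $H(\omega)=H_S(\omega)=p^{-1}(H(y))$ and $p(H_S(\omega))=H(y)$.
   Context: For $y\in Y$, $H(y)=\bigcap_V\overline{V}$ over all neighborhoods $V$ of $y$. For $U\subset X$, $S(U)=p^{-1}(p(U))$ is its saturation. For $\omega\in\Delta$: $H(\omega)=\bigcap_{N}\overline{S(N)}$ where $N$ runs over all open neighborhoods of $\omega$ in $X$, and $H_S(\omega)=\bigcap_{N_S}\overline{N_S}$ where $N_S$ runs over all saturated open neighborhoods of $\omega$. *)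

From mathcomp Require Import all_boot all_algebra.
From mathcomp Require Import all_classical all_reals all_analysis.
Set Implicit Arguments. Unset Strict Implicit. Unset Printing Implicit Defensive.
Local Open Scope classical_set_scope.

Definition is_partition (X : Type) (Delta : set (set X)) : Prop :=
  (forall B, Delta B -> B !=set0) /\
  (forall B C, Delta B -> Delta C -> B `&` C !=set0 -> B = C) /\
  (forall x, exists2 B, Delta B & B x).

Definition is_quotient_by (X Y : topologicalType) (Delta : set (set X)) (p : X -> Y) : Prop :=
  (forall y : Y, exists x, p x = y) /\
  (forall x x' : X, p x = p x' <-> exists2 B, Delta B & (B x /\ B x')) /\
  (forall V : set Y, open V <-> open (p @^-1` V)).

Definition open_map (X Y : topologicalType) (p : X -> Y) : Prop :=
  forall U : set X, open U -> open (p @` U).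

Definition sat (X Y : Type) (p : X -> Y) (U : set X) : set X := p @^-1` (p @` U).

Definition Hpt (Y : topologicalType) (y : Y) : set Y :=
  [set z | forall V, nbhs y V -> closure V z].

Definition Hblk (X Y : topologicalType) (p : X -> Y) (w : set X) : set X :=
  [set x | forall N : set X, open N -> w `<=` N -> closure (sat p N) x].

Definition HS (X Y : topologicalType) (p : X -> Y) (w : set X) : set X :=
  [set x | forall N : set X, open N -> w `<=` N -> sat p N = N -> closure N x].

From mathcomp Require Import all_boot all_algebra.
From mathcomp Require Import all_classical all_reals all_analysis.
Set Implicit Arguments. Unset Strict Implicit. Unset Printing Implicit Defensive.
Local Open Scope classical_set_scope.

(* The quotient map p is continuous, so for an open V containing y the set
   p^-1(V) is a saturated open neighbourhood of the block w; hence
   H_S(w) lies in p^-1(H(y)). When p is also open, p(N) is an open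
   neighbourhood of y for every open N containing w, and for an open map the
   preimage of the closure of p(N) lies in the closure of p^-1(p(N)) = S(N);
   so p^-1(H(y)) lies in H(w), closing the chain of inclusions. *)

Lemma closure_openP (T : topologicalType) (A : set T) (x : T) :
  closure A x <-> (forall U, open U -> U x -> A `&` U !=set0).
Proof.
split=> [clAx U oU Ux | meetA B].
- by apply: clAx; exact: open_nbhs_nbhs.
- rewrite nbhsE => -[U [oU Ux] UB].
  have [z [Az Uz]] := meetA U oU Ux.
  by exists z; split => //; exact: UB.
Qed.

Lemma continuous_closure_preimage (S T : topologicalType) (f : S -> T)
    (A : set T) :
  continuous f -> closure (f @^-1` A) `<=` f @^-1` closure A.
Proof.
move=> /continuousP fcont x /closure_openP clx.
apply/closure_openP => U oU Ufx.
have [z [Afz Uz]] := clx _ (fcont _ oU) Ufx.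
by exists (f z).
Qed.

Lemma open_map_preimage_closure (S T : topologicalType) (f : S -> T)
    (A : set T) :
  open_map f -> f @^-1` closure A `<=` closure (f @^-1` A).
Proof.
move=> fopen x /closure_openP clfx.
apply/closure_openP => U oU Ux.
have [b [Ab [z Uz fzb]]] := clfx _ (fopen _ oU) (imageP f Ux).
by exists z; rewrite /= fzb.
Qed.

Lemma sat_preimage (S T : Type) (f : S -> T) (V : set T) :
  sat f (f @^-1` V) = f @^-1` V.
Proof.
apply/seteqP; split=> x /=; first by move=> [z Vfz <-].
by move=> Vfx; exists x.
Qed.

Lemma Hblk_sub_HS (S T : topologicalType) (f : S -> T) (w : set S) :
  Hblk f w `<=` HS f w.
Proof. by move=> x Hx N oN wN satN; rewrite -satN; exact: Hx. Qed.

Lemma HS_sub_preimage_Hpt (S T : topologicalType) (f : S -> T)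
    (w : set S) (y : T) :
  continuous f -> w `<=` f @^-1` [set y] -> HS f w `<=` f @^-1` Hpt y.
Proof.
move=> fcont wy x HSx V; rewrite nbhsE => -[U [oU Uy] UV].
have clU : closure (f @^-1` U) x.
  apply: HSx; first exact: (proj1 (continuousP f) fcont).
  - by move=> z /wy /= ->.
  - exact: sat_preimage.
apply: closureS UV _ _.
exact: continuous_closure_preimage.
Qed.

Lemma preimage_Hpt_sub_Hblk (S T : topologicalType) (f : S -> T)
    (w : set S) (y : T) :
  open_map f -> f @` w = [set y] -> f @^-1` Hpt y `<=` Hblk f w.
Proof.
move=> fopen fw x Hfx N oN wN.
have fNy : nbhs y (f @` N).
  apply: open_nbhs_nbhs; split; first exact: fopen.
  have : (f @` w) y by rewrite fw.
  by case=> u wu <-; exists u; [exact: wN |].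
exact: (open_map_preimage_closure (A := f @` N) fopen (Hfx _ fNy)).
Qed.

Theorem lemma3p5 (X Y : topologicalType) (Delta : set (set X)) (p : X -> Y)
  (w : set X) (y : Y) :
  is_partition Delta -> is_quotient_by Delta p ->
  Delta w -> p @` w = [set y] ->
  (Hblk p w `<=` HS p w /\ HS p w `<=` p @^-1` Hpt y) /\
  (open_map p ->
     Hblk p w = HS p w /\ HS p w = p @^-1` Hpt y /\ p @` HS p w = Hpt y).
Proof.
move=> _ [psurj [_ pquot]] _ pw.
have pcont : continuous p by apply/continuousP => V /pquot.
have wy : w `<=` p @^-1` [set y] by rewrite -image_sub pw.
have HS_Hpt := HS_sub_preimage_Hpt pcont wy.
split=> [|popen]; first by split=> //; exact: Hblk_sub_HS.
have Hpt_Hblk := preimage_Hpt_sub_Hblk popen pw.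
have HSE : HS p w = p @^-1` Hpt y.
  by apply/seteqP; split=> // x /Hpt_Hblk /Hblk_sub_HS.
have HblkE : Hblk p w = HS p w.
  by apply/seteqP; split; [exact: Hblk_sub_HS | rewrite HSE].
split=> //; split=> //.
rewrite HSE image_preimage //.
by apply/seteqP; split=> // z _; have [x <-] := psurj z; exists x.
Qed.
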